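(* Let $t\ge 2$, $r\ge 3$ and $k\ge 3$ be fixed integers. Then $\mathrm{ex}_r(n,F_{t,k}^r)=\Theta(n^r)$ if $k>r$, and $\mathrm{ex}_r(n,F_{t,k}^r)=\Theta(n^{r-1})$ if $3\le k\le r$ (as $n\to\infty$).
   Context: $F_{t,k}$ denotes the graph on $(k-1)t+1$ vertices consisting of $t$ copies of the complete graph $K_k$ pairwise sharing exactly one common vertex. For a graph $F$, its $r$-expansion $F^r$ is the $r$-graph obtained from $F$ by adding to each edge of $F$ a set of $r-2$ new vertices, where all $(r-2)|E(F)|$ new vertices are distinct from each other and from $V(F)$; each edge together with its new vertices becomes a hyperedge. $\mathrm{ex}_r(n,\mathcal F)$ denotes the maximum number of hyperedges in an $n$-vertex $r$-graph not containing $\mathcal F$ as a subhypergraph. *)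

From HB Require Import structures.
From mathcomp Require Import all_boot all_order all_algebra.
Set Implicit Arguments. Unset Strict Implicit. Unset Printing Implicit Defensive.
Import Order.TTheory GRing.Theory Num.Theory.

(* A (hyper)graph on a finite vertex type V is given by its edge set
   E : {set {set V}}.  A simple graph has all edges of size 2;
   an r-graph has all edges of size r. *)

Definition uniform (V : finType) (r : nat) (E : {set {set V}}) : bool :=
  [forall e in E, #|e| == r].

Definition contains (U W : finType) (H : {set {set U}}) (G : {set {set W}}) : bool :=
  [exists f : {ffun W -> U}, injectiveb f && [forall e in G, (f @: e) \in H]].

(* The r-expansion of a graph (V, E): each edge e receives r-2 new vertices
   (inr (e, i)), all distinct from each other and from V. *)
Definition exp_vertex (V : finType) (E : {set {set V}}) (r : nat) : finType :=
  (V + ({e : {set V} | e \in E} * 'I_(r - 2)))%type.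

Definition exp_edge (V : finType) (E : {set {set V}}) (r : nat)
  (s : {e : {set V} | e \in E}) : {set exp_vertex E r} :=
  [set inl v | v in val s] :|: [set inr (s, i) | i : 'I_(r - 2)].

Definition expansion (V : finType) (E : {set {set V}}) (r : nat)
  : {set {set exp_vertex E r}} :=
  [set exp_edge r s | s : {e : {set V} | e \in E}].

(* F_{t,k}: t copies of K_k sharing exactly one common vertex.
   Vertices: None (the common vertex) and Some (i, j), the j-th of the
   k-1 private vertices of copy i.  Total (k-1)t+1 vertices. *)
Definition Ftk_vertex (t k : nat) : finType := option ('I_t * 'I_k.-1).

Definition Ftk_adj (t k : nat) (x y : Ftk_vertex t k) : bool :=
  match x, y with
  | Some (i, _), Some (i', _) => i == i'
  | _, _ => true
  end.

Definition Ftk (t k : nat) : {set {set Ftk_vertex t k}} :=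
  [set e : {set Ftk_vertex t k} |
     [exists x, exists y, [&& x != y, Ftk_adj x y & e == [set x; y]]]].

Definition ex_r (r n : nat) (W : finType) (G : {set {set W}}) : nat :=
  \max_(H : {set {set 'I_n}} | uniform r H && ~~ contains H G) #|H|.

Local Open Scope ring_scope.

Definition bigTheta (f : nat -> nat) (d : nat) : Prop :=
  exists (c1 c2 : rat) (N : nat), 0 < c1 /\ 0 < c2 /\
    forall n : nat, (N <= n)%N ->
      c1 * (n%:R ^+ d) <= (f n)%:R /\ (f n)%:R <= c2 * (n%:R ^+ d).

From HB Require Import structures.
From mathcomp Require Import all_boot all_order all_algebra.
From mathcomp Require Import zify.
Set Implicit Arguments. Unset Strict Implicit. Unset Printing Implicit Defensive.
Import Order.TTheory GRing.Theory Num.Theory.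

(* Upper bounds: for [k > r] count all [r]-sets.  For [k <= r] delete, as
   long as possible, all edges through an [(r-1)]-set of codegree below a
   constant [M]; this removes [O(n^(r-1))] edges, and in what remains every
   [(r-1)]-subset of an edge has codegree at least [M].  For [M] large such a
   hypergraph contains [F_{t,k}^r]: pick [t] edges through a common vertex,
   pairwise disjoint elsewhere, to host the [t] cliques [K_k] (possible as
   [k <= r]), then greedily extend each pair of [F_{t,k}] to a fresh edge.
   Lower bounds: for [k > r] the complete [r]-partite [r]-graph has rainbow
   edges under the part colouring, whereas the core of an expanded [K_k] needs
   [k] colours; for [k <= r] a star over a complete [(r-1)]-partite
   [(r-1)]-graph has no two disjoint edges, whereas [F_{t,k}^r] has. *)

Lemma card_uniform_edge (V : finType) s (H : {set {set V}}) e :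
  uniform s H -> e \in H -> #|e| = s.
Proof. by move=> Hu eH; apply/eqP; apply: (forall_inP Hu). Qed.

Lemma uniformS (V : finType) s (H H' : {set {set V}}) :
  H' \subset H -> uniform s H -> uniform s H'.
Proof.
by move=> sub Hu; apply/forall_inP => e /(subsetP sub); apply: (forall_inP Hu).
Qed.

Lemma contains_subset (U W : finType) (H H' : {set {set U}}) (G : {set {set W}}) :
  H' \subset H -> contains H' G -> contains H G.
Proof.
move=> sub /existsP [f /andP [finj /forall_inP fG]]; apply/existsP; exists f.
by rewrite finj; apply/forall_inP => e eG; apply: (subsetP sub); apply: fG.
Qed.

Section Codegree.

Variable T : finType.
Implicit Types (H : {set {set T}}) (S U A e f : {set T}).

Definition codegree H S := #|[set f in H | S \subset f]|.

Definition min_codegree m H :=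
  [forall e in H, forall y in e, m <= codegree H (e :\ y)].

Definition shadow s H :=
  [set S : {set T} | (#|S| == s) && [exists e in H, S \subset e]].

(* Repeatedly delete all edges through an [s]-set of codegree below [m]: each
   round loses fewer than [m] edges and at least one [s]-set of the shadow. *)
Lemma min_codegree_subgraph s m H :
  uniform s.+1 H -> m * #|shadow s H| < #|H| ->
  exists2 H' : {set {set T}}, H' \subset H & (H' != set0) && min_codegree m H'.
Proof.
elim: {H}#|H| {-2}H (leqnn #|H|) => [|N IH] H HN Hu Hlt.
  by move: Hlt; rewrite leqn0 in HN; rewrite (eqP HN).
have [Hg|] := boolP (min_codegree m H).
  exists H => //; rewrite Hg andbT; apply/set0Pn/card_gt0P.
  exact: leq_ltn_trans Hlt.
rewrite negb_forall_in => /exists_inP [e eH]; rewrite negb_forall_in.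
case/exists_inP => y ye; rewrite -ltnNge => low.
set S := e :\ y in low; set C := [set f in H | S \subset f].
have CH : C \subset H by apply/subsetP => f; rewrite inE => /andP [].
have eC : e \in C by rewrite inE eH subsetDl.
have cardH : #|H :\: C| + #|C| = #|H|.
  by rewrite cardsD (setIidPr CH) subnK // subset_leq_card.
have S_shadow : S \in shadow s H.
  have := card_uniform_edge Hu eH; rewrite (cardsD1 y e) ye add1n => -[cardS].
  by rewrite inE cardS eqxx /=; apply/exists_inP; exists e; rewrite ?subsetDl.
have shadow_sub : shadow s (H :\: C) \subset shadow s H :\ S.
  apply/subsetP => X; rewrite !inE => /andP [-> /exists_inP [f]].
  rewrite inE => /andP [fC fH] Xf; apply/andP; split.
    by apply: contraNneq fC => XS; rewrite inE fH -XS Xf.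
  by apply/exists_inP; exists f.
have shadow_lt : #|shadow s (H :\: C)| < #|shadow s H|.
  apply: leq_ltn_trans (subset_leq_card shadow_sub) _.
  by rewrite (cardsD1 S (shadow s H)) S_shadow.
have C_gt0 : 0 < #|C| by apply/card_gt0P; exists e.
have smaller : #|H :\: C| <= N by lia.
have still_dense : m * #|shadow s (H :\: C)| < #|H :\: C|.
  by rewrite /codegree -/C in low; nia.
have [H' H'sub H'good] := IH _ smaller (uniformS (subsetDl _ _) Hu) still_dense.
by exists H' => //; apply: subset_trans H'sub (subsetDl _ _).
Qed.

(* An edge through [S] that meets [U] outside [S] is [S] plus a point of [U]. *)
Lemma codegree_edge_avoiding s m H S U :
  uniform s.+1 H -> #|S| = s -> #|U| < m -> m <= codegree H S ->
  exists2 f, f \in H & (S \subset f) && [disjoint f :\: S & U].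
Proof.
move=> Hu cardS ltUm le_m_cod; apply/exists_inP; apply: contraTT le_m_cod.
rewrite negb_exists_in -ltnNge => /forall_inP meetU.
have sub : [set f in H | S \subset f] \subset [set S :|: [set z] | z in U].
  apply/subsetP => f; rewrite inE => /andP [fH Sf].
  have := meetU f fH; rewrite Sf /= -setI_eq0 => /set0Pn [z].
  rewrite !inE => /andP [/andP [zS zf] zU]; apply/imsetP; exists z => //.
  apply/eqP; rewrite eq_sym eqEcard subUset Sf sub1set zf /=.
  by rewrite setUC cardsU1 (negPf zS) cardS (card_uniform_edge Hu fH).
exact: leq_ltn_trans (subset_leq_card sub) (leq_ltn_trans (leq_imset_card _ _) ltUm).
Qed.

Lemma min_codegree_edge_avoiding s m H U A e :
  uniform s.+1 H -> min_codegree m H -> e \in H -> A \subset e -> #|U| < m ->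
  exists2 f, f \in H & (A \subset f) && [disjoint f :\: A & U].
Proof.
move=> Hu Hm; elim: {e}#|(e :\: A) :&: U| {-2}e (leqnn #|(e :\: A) :&: U|).
  move=> e; rewrite leqn0 cards_eq0 setI_eq0 => eU eH Ae _.
  by exists e; rewrite ?Ae.
move=> N IH e le_N eH Ae ltUm.
have [|] := boolP ((e :\: A) :&: U == set0).
  by rewrite setI_eq0 => eU; exists e; rewrite ?Ae.
case/set0Pn => y; rewrite !inE => /andP [/andP [yA ye] yU].
have cardS : #|e :\ y| = s.
  by have := card_uniform_edge Hu eH; rewrite (cardsD1 y e) ye add1n => -[].
have [f fH /andP [Sf fU]] := codegree_edge_avoiding Hu cardS ltUm
  (forall_inP (forall_inP Hm e eH) y ye).
have Af : A \subset f.
  apply: subset_trans Sf; apply/subsetP => x xA; rewrite !inE (subsetP Ae x xA).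
  by rewrite andbT; apply: contraNneq yA => <-.
have shrink : (f :\: A) :&: U \subset ((e :\: A) :&: U) :\ y.
  apply/subsetP => x; rewrite !inE => /andP [/andP [xA xf] xU].
  rewrite xA xU !andbT /=.
  have [|notS] := boolP (x \in e :\ y); first by rewrite !inE.
  have : x \in (f :\: (e :\ y)) :&: U by rewrite inE xU andbT inE notS.
  by move: fU; rewrite -setI_eq0 => /eqP ->; rewrite inE.
apply: (IH f) fH Af ltUm; apply: leq_trans (subset_leq_card shrink) _.
by move: le_N; rewrite (cardsD1 y) !inE yA ye yU.
Qed.

Lemma leq_card_bigcup (I : finType) (D : {set I}) (F : I -> {set T}) :
  #|\bigcup_(j in D) F j| <= \sum_(j in D) #|F j|.
Proof.
elim/big_rec2: _ => [|j n X _ le_X_n]; first by rewrite cards0.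
by rewrite (leq_trans (leq_card_setU _ _)) ?leq_add2l.
Qed.

(* Extend the sets [A i] one at a time, each time avoiding [U] and the new
   vertices of all edges chosen so far; these never exceed [#|U| + s.+1 #|I|]. *)
Lemma min_codegree_edges_avoiding (I : finType) s m H U (A : I -> {set T}) :
  uniform s.+1 H -> min_codegree m H ->
  (forall i, exists2 e, e \in H & A i \subset e) ->
  #|U| + s.+1 * #|I| < m ->
  exists g : I -> {set T},
    (forall i, [/\ g i \in H, A i \subset g i & [disjoint g i :\: A i & U]]) /\
    (forall i j, i != j -> [disjoint g i :\: A i & g j :\: A j]).
Proof.
move=> Hu Hm HA ltm.
suff /(_ setT) [g [gH gdis]] : forall D : {set I}, exists g : I -> {set T},
    (forall i, i \in D ->
       [/\ g i \in H, A i \subset g i & [disjoint g i :\: A i & U]]) /\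
    (forall i j, i \in D -> j \in D -> i != j -> [disjoint g i :\: A i & g j :\: A j]).
  by exists g; split=> [i|i j]; [apply: gH | apply: gdis].
move=> D; elim: {D}#|D| {-2}D (leqnn #|D|) => [|N IH] D le_D_N;
    have [->|/set0Pn [i0 i0D]] := eqVneq D set0;
    try by exists (fun=> set0); split=> [i|i j]; rewrite inE.
  by move: le_D_N; rewrite leqn0 cards_eq0 => /eqP D0; move: i0D; rewrite D0 inE.
have [|g [gH gdis]] := IH (D :\ i0).
  by move: le_D_N; rewrite (cardsD1 i0) i0D.
set U' := U :|: \bigcup_(j in D :\ i0) g j.
have ltU'm : #|U'| < m.
  apply: leq_ltn_trans ltm; apply: leq_trans (leq_card_setU _ _) _.
  rewrite leq_add2l; apply: leq_trans (leq_card_bigcup _ _) _.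
  rewrite (eq_bigr (fun _ => s.+1)) ?sum_nat_const => [|j /gH [gjH _ _]].
    by rewrite mulnC leq_pmul2l // max_card.
  exact: card_uniform_edge Hu gjH.
have [e eH Ae] := HA i0.
have [f fH /andP [Af fU']] := min_codegree_edge_avoiding Hu Hm eH Ae ltU'm.
have f_new : forall j, j \in D :\ i0 -> [disjoint f :\: A i0 & g j :\: A j].
  move=> j jD; apply: disjointWr fU'; apply: subset_trans (subsetDl _ _) _.
  by apply: subset_trans (subsetUr U _); apply: bigcup_sup.
exists (fun i => if i == i0 then f else g i); split=> [i iD|i j iD jD].
  have [->|ne] := eqVneq i i0; last by apply: gH; rewrite !inE ne.
  by split=> //; apply: disjointWr fU'; apply: subsetUl.
have [->|ni] := eqVneq i i0; have [->|nj] := eqVneq j i0 => //.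
- by move=> _; apply: f_new; rewrite !inE nj.
- by move=> _; rewrite disjoint_sym; apply: f_new; rewrite !inE ni.
- by apply: gdis; rewrite !inE ?ni ?nj.
Qed.

Lemma mem_nth_enum x0 S j : j < #|S| -> nth x0 (enum S) j \in S.
Proof. by move=> ltjS; rewrite -mem_enum mem_nth // -cardE. Qed.

Lemma nth_enum_inj x0 S j l :
  j < #|S| -> l < #|S| -> nth x0 (enum S) j = nth x0 (enum S) l -> j = l.
Proof. by move=> ltjS ltlS /eqP; rewrite nth_uniq ?enum_uniq -?cardE // => /eqP. Qed.

Lemma imset_nth_enum x0 p S : #|S| = p -> [set nth x0 (enum S) i | i : 'I_p] = S.
Proof.
move=> cardS; apply/setP => z; apply/imsetP/idP => [[i _ ->]|zS].
  by apply: mem_nth_enum; rewrite cardS.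
have lt_idx : index z (enum S) < p by rewrite -cardS cardE index_mem mem_enum.
by exists (Ordinal lt_idx) => //=; rewrite nth_index // mem_enum.
Qed.

Lemma nth_enum_family_inj (I : finType) x0 p (D : I -> {set T}) :
  (forall i, p <= #|D i|) -> (forall i j, i != j -> [disjoint D i & D j]) ->
  injective (fun ij : I * 'I_p => nth x0 (enum (D ij.1)) ij.2).
Proof.
move=> le_p Ddis [i j] [i' j'] /= eq_ij.
have lt_D (l : 'I_p) (i1 : I) : l < #|D i1| := leq_trans (ltn_ord l) (le_p i1).
have [ii'|ne] := eqVneq i i'.
  by subst i'; congr (_, _); apply: val_inj; apply: nth_enum_inj eq_ij; apply: lt_D.
have := Ddis i i' ne; rewrite -setI_eq0 => /eqP /setP /(_ (nth x0 (enum (D i)) j)).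
by rewrite !inE mem_nth_enum // eq_ij mem_nth_enum.
Qed.

Lemma sum_case_inj (A B : Type) (f : A -> T) (g : B -> T) :
  injective f -> injective g -> (forall a b, f a != g b) ->
  injective (fun v : A + B => match v with inl a => f a | inr b => g b end).
Proof.
move=> finj ginj fg [a|b] [a'|b'] eq_fg.
- by rewrite (finj _ _ eq_fg).
- by have := fg a b'; rewrite eq_fg eqxx.
- by have := fg a' b; rewrite eq_fg eqxx.
- by rewrite (ginj _ _ eq_fg).
Qed.

(* Embed the vertices of [G] by [c], then choose pairwise disjoint edges of [H]
   extending the images of the edges of [G], avoiding the image of [c]. *)
Lemma min_codegree_contains_expansion (W : finType) (x0 : T) s m H
    (G : {set {set W}}) (c : W -> T) :
  uniform s.+1 H -> min_codegree m H -> uniform 2 G -> injective c ->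
  (forall e : {set W}, e \in G -> exists2 f, f \in H & c @: e \subset f) ->
  #|W| + s.+1 * #|G| < m ->
  contains H (expansion G s.+1).
Proof.
move=> Hu Hm G2 cinj Gcov ltm.
pose I := {e : {set W} | e \in G}.
have [|g [gprop gdis]] := @min_codegree_edges_avoiding I s m H (c @: setT)
  (fun x => c @: val x) Hu Hm (fun x => Gcov _ (valP x)).
  apply: leq_ltn_trans ltm; rewrite card_sig leq_add //.
  by rewrite (leq_trans (leq_imset_card _ _)) ?cardsT.
pose D (x : I) := g x :\: c @: val x.
have cardD x : #|D x| = s.+1 - 2.
  have [gxH cxg _] := gprop x.
  rewrite cardsDS // (card_uniform_edge Hu gxH) card_imset //.
  by rewrite (card_uniform_edge G2 (valP x)).
pose Fnew (p : I * 'I_(s.+1 - 2)) := nth x0 (enum (D p.1)) p.2.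
have FnewD x j : Fnew (x, j) \in D x by apply: mem_nth_enum; rewrite cardD.
pose F : {ffun exp_vertex G s.+1 -> T} :=
  [ffun v => match v with inl w => c w | inr p => Fnew p end].
apply/existsP; exists F; apply/andP; split.
  have c_Fnew w p : c w != Fnew p.
    case: p => x j; have [_ _ Dc] := gprop x.
    by apply: contraTneq (FnewD x j) => <-; rewrite (disjointFl Dc) ?imset_f.
  have Fnew_inj : injective Fnew.
    by apply: nth_enum_family_inj => [x|x y /gdis]; rewrite ?cardD.
  apply/injectiveP => v v'; rewrite !ffunE; exact: (sum_case_inj cinj Fnew_inj c_Fnew).
apply/forall_inP => e /imsetP [x _ ->]; rewrite /exp_edge imsetU -!imset_comp.
rewrite (eq_imset (g := c)); last by move=> w; rewrite /= ffunE.
rewrite (eq_imset (g := fun j : 'I_(s.+1 - 2) => nth x0 (enum (D x)) j)); last first.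
  by move=> j; rewrite /= ffunE.
have [gxH cxg _] := gprop x.
by rewrite imset_nth_enum // -{1}(setIidPr cxg) setID.
Qed.

End Codegree.

Lemma card_shadow_le n s (H : {set {set 'I_n}}) : #|shadow s H| <= 'C(n, s).
Proof.
rewrite -[n in 'C(n, _)]card_ord -card_draws; apply: subset_leq_card.
by apply/subsetP => S; rewrite !inE => /andP [].
Qed.

Section Ftk.

Variables t k : nat.

Lemma FtkP (e : {set Ftk_vertex t k}) :
  reflect (exists a, exists b, [/\ a != b, Ftk_adj a b & e = [set a; b]])
          (e \in Ftk t k).
Proof.
rewrite inE; apply: (iffP existsP) => [[a /existsP [b /and3P [ab adj /eqP ->]]]|].
  by exists a, b.
by case=> a [b [ab adj ->]]; exists a; apply/existsP; exists b; rewrite ab adj eqxx.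
Qed.

Lemma Ftk_uniform : uniform 2 (Ftk t k).
Proof. by apply/forall_inP => e /FtkP [a [b [ab _ ->]]]; rewrite cards2 ab. Qed.

Lemma Ftk_clique : 0 < t -> 0 < k ->
  exists2 K : {set Ftk_vertex t k}, #|K| = k &
    {in K &, forall u w, u != w -> [set u; w] \in Ftk t k}.
Proof.
move=> t_gt0 k_gt0; pose i0 := Ordinal t_gt0.
exists (None |: [set Some (i0, j) | j : 'I_k.-1]).
  rewrite cardsU1 card_imset ?card_ord; last by move=> j l [].
  by case: imsetP => [[]|] //; lia.
move=> u w uK wK uw; apply/FtkP; exists u, w; split=> //.
move: uK wK; rewrite !inE => /orP [/eqP ->|/imsetP [j _ ->]] //.
by case/orP => [/eqP ->|/imsetP [l _ ->]].
Qed.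

Lemma Ftk_disjoint_edges : 1 < t -> 2 < k ->
  exists e1, exists e2,
    [/\ e1 \in Ftk t k, e2 \in Ftk t k, e1 != e2 & [disjoint e1 & e2]].
Proof.
move=> t_gt1 k_gt2; have t_gt0 := ltnW t_gt1.
have k1_gt0 : 0 < k.-1 by lia.
have k1_gt1 : 1 < k.-1 by lia.
pose v (i : 'I_t) (j : 'I_k.-1) : Ftk_vertex t k := Some (i, j).
pose e i := [set v i (Ordinal k1_gt0); v i (Ordinal k1_gt1)].
have eFtk i : e i \in Ftk t k.
  apply/FtkP; exists (v i (Ordinal k1_gt0)), (v i (Ordinal k1_gt1)); split=> //=.
  by rewrite /v (inj_eq (@Some_inj _)) xpair_eqE eqxx.
exists (e (Ordinal t_gt0)), (e (Ordinal t_gt1)); split=> //.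
  apply/negP => /eqP /setP /(_ (v (Ordinal t_gt0) (Ordinal k1_gt0))).
  by rewrite !inE eqxx.
rewrite -setI_eq0; apply/eqP/setP => x; rewrite !inE.
by apply/negP => /andP [/orP [] /eqP -> /orP [] /eqP].
Qed.

(* Build [t] edges of [H] through a common vertex [v0], pairwise disjoint
   outside [v0], and place the [i]-th copy of [K_k] inside the [i]-th one. *)
Lemma min_codegree_Ftk_core (T : finType) s m (H : {set {set T}}) :
  uniform s.+1 H -> min_codegree m H -> H != set0 -> k <= s.+1 -> s.+1 * t < m ->
  exists c : Ftk_vertex t k -> T, injective c /\
    forall e, e \in Ftk t k -> exists2 f, f \in H & c @: e \subset f.
Proof.
move=> Hu Hm /set0Pn [e0 e0H] le_ks ltm.
have [v0 v0e0] : exists v0, v0 \in e0.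
  by apply/card_gt0P; rewrite (card_uniform_edge Hu e0H).
have v0_cover : forall i : 'I_t, exists2 e, e \in H & [set v0] \subset e.
  by exists e0; rewrite ?sub1set.
have [|E [Eprop Edis]] := @min_codegree_edges_avoiding T 'I_t s m H set0
  (fun=> [set v0]) Hu Hm v0_cover; first by rewrite cards0 card_ord.
have EH i : E i \in H by have [] := Eprop i.
have v0E i : v0 \in E i by have [_] := Eprop i; rewrite sub1set.
pose D i := E i :\ v0.
have cardD i : #|D i| = s.
  by have := card_uniform_edge Hu (EH i); rewrite (cardsD1 v0) v0E add1n => -[].
pose c (v : Ftk_vertex t k) := if v is Some (i, j) then nth v0 (enum (D i)) j else v0.
have cD i j : c (Some (i, j)) \in D i.
  by apply: mem_nth_enum; rewrite cardD; have := ltn_ord j; lia.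
have cE i v : (if v is Some (i', _) then i' == i else true) -> c v \in E i.
  by case: v => [[i' j] /eqP <-|_]; [have := cD i' j; rewrite inE => /andP [] | ].
exists c; split.
  have cSome_inj : injective (fun ij : 'I_t * 'I_k.-1 => nth v0 (enum (D ij.1)) ij.2).
    by apply: nth_enum_family_inj => [i|i j /Edis //]; rewrite cardD; lia.
  have c_v0 i j : c (Some (i, j)) != v0 by have := cD i j; rewrite !inE => /andP [].
  case=> [[i j]|] [[i' j']|] //=.
  - by move=> /(cSome_inj (i, j) (i', j')) [-> ->].
  - by move=> eq_v0; have := c_v0 i j; rewrite /= eq_v0 eqxx.
  - by move=> eq_v0; have := c_v0 i' j'; rewrite /= -eq_v0 eqxx.
move=> e /FtkP [a [b [ab adj ->]]]; rewrite imsetU1 imset_set1.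
have [i [cai cbi]] : exists i, c a \in E i /\ c b \in E i.
  move: ab adj; case: a => [[i j]|]; case: b => [[i' j']|] // _.
  - by move/eqP => <-; exists i; split; apply: cE.
  - by exists i; split; apply: cE.
  - by exists i'; split; apply: cE.
by exists (E i); rewrite // subUset !sub1set cai cbi.
Qed.

End Ftk.

Definition Ftk_codegree_bound t k s :=
  (s.+1 * (t + #|Ftk t k|) + #|Ftk_vertex t k|).+1.

Lemma min_codegree_contains_Ftk_expansion (T : finType) t k s (H : {set {set T}}) :
  uniform s.+1 H -> min_codegree (Ftk_codegree_bound t k s) H -> H != set0 ->
  k <= s.+1 -> contains H (expansion (Ftk t k) s.+1).
Proof.
move=> Hu Hm H0 le_ks.
have [|c [cinj ccov]] := @min_codegree_Ftk_core t k _ _ _ _ Hu Hm H0 le_ks.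
  by rewrite /Ftk_codegree_bound; nia.
apply: (min_codegree_contains_expansion (c None) Hu Hm (Ftk_uniform t k) cinj ccov).
by rewrite /Ftk_codegree_bound; nia.
Qed.

Lemma card_Ftk_expansion_free t k s n (H : {set {set 'I_n}}) :
  k <= s.+1 -> uniform s.+1 H -> ~~ contains H (expansion (Ftk t k) s.+1) ->
  #|H| <= Ftk_codegree_bound t k s * 'C(n, s).
Proof.
move=> le_ks Hu; apply: contraNT; rewrite -ltnNge => big.
have [H' sub /andP [H'0 H'm]] := min_codegree_subgraph Hu
  (leq_ltn_trans (leq_mul (leqnn _) (card_shadow_le s H)) big).
apply: (contains_subset sub).
exact: min_codegree_contains_Ftk_expansion (uniformS sub Hu) H'm H'0 le_ks.
Qed.

Section ExpansionObstructions.

Variables (T W : finType) (r : nat) (H : {set {set T}}) (G : {set {set W}}).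

Lemma exp_edge_inl (x : {e : {set W} | e \in G}) v :
  v \in val x -> inl v \in exp_edge r x.
Proof. by move=> vx; rewrite !inE imset_f. Qed.

(* The core vertices of a clique of [G] pairwise share an edge of [H], so a
   colouring that is injective on every edge of [H] is injective on them. *)
Lemma rainbow_contains_expansion_clique (rho : T -> 'I_r) (K : {set W}) :
  (forall e, e \in H -> {in e &, injective rho}) -> contains H (expansion G r) ->
  {in K &, forall u w, u != w -> [set u; w] \in G} -> #|K| <= r.
Proof.
move=> Hrho /existsP [F /andP [/injectiveP Finj /forall_inP FG]] Kclique.
pose sigma v := rho (F (inl v)).
suff sigma_inj : {in K &, injective sigma}.
  by rewrite -(card_in_imset sigma_inj) -[leqRHS]card_ord max_card.
move=> u w uK wK; apply: contra_eq => uw.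
pose x := exist (fun e => e \in G) _ (Kclique u w uK wK uw).
have /Hrho rho_inj : F @: exp_edge r x \in H by apply/FG/imsetP; exists x.
have Fu : F (inl u) \in F @: exp_edge r x by apply/imset_f/exp_edge_inl/set21.
have Fw : F (inl w) \in F @: exp_edge r x by apply/imset_f/exp_edge_inl/set22.
by apply/eqP => /(rho_inj _ _ Fu Fw) /Finj [euw]; have := uw; rewrite euw eqxx.
Qed.

(* A vertex of [H] lying in the images of two expanded edges has a unique
   preimage, which expanded edges can share only through the core of [G]. *)
Lemma star_contains_expansion_intersecting (z0 : T) (e1 e2 : {set W}) :
  (forall e, e \in H -> z0 \in e) -> contains H (expansion G r) ->
  e1 \in G -> e2 \in G -> e1 != e2 -> ~~ [disjoint e1 & e2].
Proof.
move=> Hz0 /existsP [F /andP [/injectiveP Finj /forall_inP FG]] e1G e2G e12.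
pose x1 := exist (fun e => e \in G) _ e1G; pose x2 := exist (fun e => e \in G) _ e2G.
have FxH x : F @: exp_edge r x \in H by apply/FG/imsetP; exists x.
have /Hz0 /imsetP [u1 u1x1 z0u1] := FxH x1.
have /Hz0 /imsetP [u2 u2x2 z0u2] := FxH x2.
have eu : u1 = u2 by apply: Finj; rewrite -z0u1 -z0u2.
subst u2; move: u1x1 u2x2; rewrite !inE.
case/orP => /imsetP [v vx1 ->]; case/orP => /imsetP [v' vx2] // [].
  by move=> vv'; rewrite -setI_eq0; apply/set0Pn; exists v; rewrite inE vx1 vv'.
by move=> e12'; move: e12; rewrite e12' eqxx.
Qed.

End ExpansionObstructions.

Lemma eq_divmod p u u' j j' :
  j < p -> j' < p -> u * p + j = u' * p + j' -> u = u' /\ j = j'.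
Proof.
move=> ltjp ltj'p eq_uj.
have ejj' : j = j' by have := congr1 (modn^~ p) eq_uj; rewrite !modnMDl !modn_small.
split=> //; subst j'; move/eqP: eq_uj; rewrite eqn_add2r eqn_mul2r.
by case/orP => /eqP // p0; rewrite p0 in ltjp.
Qed.

(* Vertex [off + u * p + j] of ['I_n] lies in part [j] at height [u]; the edge
   of the complete [p]-partite graph with part sizes [q] picked by [a] takes
   height [a j] in every part [j]. *)
Definition partite_edge n p off q (a : {ffun 'I_p -> 'I_q}) : {set 'I_n} :=
  [set x : 'I_n | [exists j : 'I_p, val x == off + (a j * p + j)]].

Section PartiteEdge.

Variables (n p off q : nat).
Hypothesis fits : off + q * p <= n.
Implicit Types a : {ffun 'I_p -> 'I_q}.

Lemma partite_vertex_subproof a (j : 'I_p) :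
  off + (a j * p + j) < n.
Proof. by apply: leq_trans fits; have := ltn_ord (a j); have := ltn_ord j; nia. Qed.

Lemma partite_edgeE a :
  partite_edge n off a = [set Ordinal (partite_vertex_subproof a j) | j : 'I_p].
Proof.
apply/setP => x; rewrite inE; apply/existsP/imsetP => [[j /eqP xj]|[j _ ->]].
  by exists j => //; apply: val_inj.
by exists j.
Qed.

Lemma card_partite_edge a : #|partite_edge n off a| = p.
Proof.
rewrite partite_edgeE card_imset ?card_ord // => j l /(congr1 val) /= /eqP.
by rewrite eqn_add2l => /eqP /eq_divmod [] // _ /val_inj.
Qed.

Lemma partite_edge_inj : injective (@partite_edge n p off q).
Proof.
move=> a b eq_ab; apply/ffunP => j.
have : Ordinal (partite_vertex_subproof a j) \in partite_edge n off b.
  by rewrite -eq_ab partite_edgeE imset_f.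
rewrite inE => /existsP [l /eqP /= /eqP]; rewrite eqn_add2l => /eqP.
by case/eq_divmod => // /val_inj eq_ab' /val_inj ejl; rewrite eq_ab' ejl.
Qed.

Lemma partite_edge_part_inj a :
  {in partite_edge n off a &, injective (fun x : 'I_n => (x - off) %% p)}.
Proof.
move=> x y; rewrite !inE => /existsP [j /eqP xj] /existsP [l /eqP yl].
rewrite xj yl !addKn !modnMDl !modn_small // => /val_inj ejl.
by apply: val_inj; rewrite xj yl ejl.
Qed.

End PartiteEdge.

Section ExR.

Variables (r n : nat) (W : finType) (G : {set {set W}}).

Lemma ex_r_leq B :
  (forall H : {set {set 'I_n}}, uniform r H -> ~~ contains H G -> #|H| <= B) ->
  ex_r r n G <= B.
Proof. by move=> le_B; apply/bigmax_leqP => H /andP [Hu HG]; apply: le_B. Qed.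

Lemma leq_ex_r (H : {set {set 'I_n}}) :
  uniform r H -> ~~ contains H G -> #|H| <= ex_r r n G.
Proof. by move=> Hu HG; apply: (leq_bigmax_cond H); rewrite Hu HG. Qed.

End ExR.

Lemma bin_leq_exp n m : 'C(n, m) <= n ^ m.
Proof.
rewrite (leq_trans (leq_pmulr _ (fact_gt0 m))) // bin_ffact ffact_prod.
have -> : n ^ m = \prod_(i < m) n by rewrite prod_nat_const card_ord.
by apply: leq_prod => i _; apply: leq_subr.
Qed.

Lemma ex_r_leq_exp r n (W : finType) (G : {set {set W}}) : ex_r r n G <= n ^ r.
Proof.
apply: ex_r_leq => H Hu _; apply: leq_trans (bin_leq_exp n r).
rewrite -[n in 'C(n, _)]card_ord -card_draws; apply: subset_leq_card.
by apply/subsetP => e eH; rewrite inE (card_uniform_edge Hu eH).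
Qed.

Lemma ex_r_Ftk_expansion_leq t k s n :
  k <= s.+1 ->
  ex_r s.+1 n (expansion (Ftk t k) s.+1) <= Ftk_codegree_bound t k s * n ^ s.
Proof.
move=> le_ks; apply: ex_r_leq => H Hu HF.
apply: leq_trans (card_Ftk_expansion_free le_ks Hu HF) _.
by rewrite leq_mul2l bin_leq_exp orbT.
Qed.

Lemma partite_leq_ex_r t k r n : 0 < t -> r < k -> 0 < r ->
  (n %/ r) ^ r <= ex_r r n (expansion (Ftk t k) r).
Proof.
move=> t_gt0 lt_rk r_gt0; set q := n %/ r.
have fits : 0 + q * r <= n by rewrite add0n leq_divM.
pose Hp := [set partite_edge n 0 a | a : {ffun 'I_r -> 'I_q}].
have -> : q ^ r = #|Hp|.
  by rewrite card_imset ?card_ffun ?card_ord //; apply: partite_edge_inj.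
apply: leq_ex_r.
  by apply/forall_inP => e /imsetP [a _ ->]; rewrite card_partite_edge.
apply/negP => HF.
have [K cardK Kclique] := @Ftk_clique t k t_gt0 (ltn_trans r_gt0 lt_rk).
pose rho (x : 'I_n) := Ordinal (ltn_pmod x r_gt0).
suff : #|K| <= r by rewrite cardK leqNgt lt_rk.
apply: (rainbow_contains_expansion_clique (rho := rho)) HF Kclique.
move=> e /imsetP [a _ ->] x y xa ya /(congr1 val) /= exy.
by apply: (partite_edge_part_inj xa ya); rewrite /= !subn0.
Qed.

Lemma star_leq_ex_r t k s n : 1 < t -> 2 < k -> 0 < n ->
  (n.-1 %/ s) ^ s <= ex_r s.+1 n (expansion (Ftk t k) s.+1).
Proof.
move=> t_gt1 k_gt2 n_gt0; set q := n.-1 %/ s.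
have fits : 1 + q * s <= n by have := leq_divM n.-1 s; lia.
pose z0 : 'I_n := Ordinal n_gt0.
have z0_notin (a : {ffun 'I_s -> 'I_q}) : z0 \notin partite_edge n 1 a.
  by rewrite inE; apply/existsP => -[].
pose Hs := [set z0 |: partite_edge n 1 a | a : {ffun 'I_s -> 'I_q}].
have -> : q ^ s = #|Hs|.
  rewrite card_imset ?card_ffun ?card_ord // => a b eq_ab.
  by apply: (partite_edge_inj fits); rewrite -(setU1K (z0_notin a)) eq_ab setU1K.
apply: leq_ex_r.
  apply/forall_inP => e /imsetP [a _ ->].
  by rewrite cardsU1 z0_notin card_partite_edge.
apply/negP => HF.
have [e1 [e2 [e1F e2F e12 e1e2]]] := Ftk_disjoint_edges t_gt1 k_gt2.
have Hz0 : forall e, e \in Hs -> z0 \in e by move=> e /imsetP [a _ ->]; apply: setU11.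
by have := star_contains_expansion_intersecting Hz0 HF e1F e2F e12; rewrite e1e2.
Qed.

Lemma bigTheta_nat (f : nat -> nat) d A B N : 0 < A -> 0 < B ->
  (forall n, N <= n -> n ^ d <= A * f n /\ f n <= B * n ^ d) -> bigTheta f d.
Proof.
move=> A_gt0 B_gt0 bounds; exists (A%:R^-1)%R, B%:R%R, N.
split; first by rewrite invr_gt0 ltr0n.
split=> [|n /bounds [lb ub]]; first by rewrite ltr0n.
rewrite -!natrX -natrM ler_nat ub; split=> //.
by rewrite ler_pdivrMl ?ltr0n // -natrM ler_nat.
Qed.

Lemma ltn_mul3_divn n p : 0 < p -> p <= n -> n < 3 * p * (n %/ p).
Proof.
move=> p_gt0 le_pn; have := divn_eq n p; have := ltn_pmod n p_gt0.
have : 0 < n %/ p by rewrite divn_gt0.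
nia.
Qed.

Unset Implicit Arguments.

Theorem proposition2 (t r k : nat) :
  (2 <= t)%N -> (3 <= r)%N -> (3 <= k)%N ->
  ((r < k)%N -> bigTheta (fun n => ex_r r n (expansion (Ftk t k) r)) r) /\
  ((k <= r)%N -> bigTheta (fun n => ex_r r n (expansion (Ftk t k) r)) r.-1).
Proof.
move=> t_gt1 r_ge3 k_ge3; have t_gt0 := ltnW t_gt1.
split=> [lt_rk|le_kr].
  apply: (@bigTheta_nat _ r ((3 * r) ^ r) 1 r); rewrite ?expn_gt0 ?muln_gt0 //.
    by lia.
  move=> n le_rn; split; last by rewrite mul1n ex_r_leq_exp.
  apply: leq_trans (leq_mul (leqnn _) (partite_leq_ex_r n t_gt0 lt_rk _)); last by lia.
  by rewrite -expnMn leq_exp2r 1?ltnW ?ltn_mul3_divn //; lia.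
case: r r_ge3 le_kr => // s s_ge2 le_ks /=.
apply: (@bigTheta_nat _ s ((3 * s) ^ s) (Ftk_codegree_bound t k s) s.+1).
- by rewrite expn_gt0 muln_gt0; lia.
- by [].
move=> n le_sn; split; last exact: ex_r_Ftk_expansion_leq.
apply: leq_trans (leq_mul (leqnn _) (star_leq_ex_r s t_gt1 k_ge3 _)); last by lia.
rewrite -expnMn leq_exp2r; last by lia.
by have := @ltn_mul3_divn n.-1 s; lia.
Qed.
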